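(* Let $\vec\alpha\in\mathbb{R}^{10}$ be such that $\Psi[\vec\alpha]$ is an irreducible rational function and $\alpha_1+i\alpha_2\ne0$. Then for every $r>0$ the ten maps $K_1[\vec\alpha],\dots,K_{10}[\vec\alpha]:\mathbb{R}^2\to\mathbb{R}^3$ are linearly independent over $\mathbb{R}$.
   Context: Identify $\mathbb{R}^2$ with $\mathbb{C}$, $z=x+iy$; $\mathcal S(z)=\frac{1}{1+|z|^2}(2\,\mathrm{Re}\,z,2\,\mathrm{Im}\,z,|z|^2-1)$ is the stereographic projection. For $\vec\alpha=(\alpha_1,\dots,\alpha_{10})\in\mathbb{R}^{10}$ let $\Psi[\vec\alpha](z)=\frac{(\alpha_1+i\alpha_2)z^2+(\alpha_3+i\alpha_4)z+(\alpha_5+i\alpha_6)}{1-(\alpha_7+i\alpha_8)z-(\alpha_9+i\alpha_{10})z^2}$. For a parameter $r>0$ and $i=1,\dots,10$, $K_i[\vec\alpha]=r^{\beta_i}\,\partial_{\alpha_i}\mathcal S(\Psi[\vec\alpha])$, where $\beta_i=0$ for $i\in\{1,2,5,6\}$, $\beta_i=-1$ for $i\in\{3,4,7,8\}$, $\beta_i=-2$ for $i\in\{9,10\}$. *)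

From Stdlib Require Import Reals.
From Coquelicot Require Import Coquelicot.
Open Scope R_scope.

(* Parameter vectors alpha in R^10 are represented as alpha : nat -> R,
   using only the indices 1..10 (alpha 1 = alpha_1, ..., alpha 10 = alpha_10). *)

Definition cpx (a b : R) : C := (a, b).

Definition Psi_num (alpha : nat -> R) (z : C) : C :=
  (cpx (alpha 1%nat) (alpha 2%nat) * z * z + cpx (alpha 3%nat) (alpha 4%nat) * z
   + cpx (alpha 5%nat) (alpha 6%nat))%C.

Definition Psi_den (alpha : nat -> R) (z : C) : C :=
  (1 - cpx (alpha 7%nat) (alpha 8%nat) * z - cpx (alpha 9%nat) (alpha 10%nat) * z * z)%C.

Definition Psi (alpha : nat -> R) (z : C) : C := (Psi_num alpha z / Psi_den alpha z)%C.

(* Psi[alpha] is an irreducible rational function: numerator and denominator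
   (polynomials in z over C) are coprime, i.e. have no common complex root. *)
Definition Psi_irreducible (alpha : nat -> R) : Prop :=
  forall z : C, ~ (Psi_num alpha z = 0%C /\ Psi_den alpha z = 0%C).

(* stereographic projection S(z) = (2 Re z, 2 Im z, |z|^2 - 1) / (1 + |z|^2),
   given componentwise: S_comp 0, S_comp 1, S_comp 2 *)
Definition S_comp (k : nat) (z : C) : R :=
  let n2 := Cmod z ^ 2 in
  match k with
  | O => 2 * Re z / (1 + n2)
  | 1%nat => 2 * Im z / (1 + n2)
  | _ => (n2 - 1) / (1 + n2)
  end.

Definition upd (alpha : nat -> R) (i : nat) (t : R) : nat -> R :=
  fun j => if Nat.eqb j i then t else alpha j.

Definition rbeta (r : R) (i : nat) : R :=
  match i with
  | 1%nat | 2%nat | 5%nat | 6%nat => 1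
  | 3%nat | 4%nat | 7%nat | 8%nat => / r
  | _ => / (r ^ 2)
  end.

Definition K (alpha : nat -> R) (r : R) (i : nat) (k : nat) (z : C) : R :=
  rbeta r i * Derive (fun t => S_comp k (Psi (upd alpha i t) z)) (alpha i).

Definition lincomb (c : nat -> R) (alpha : nat -> R) (r : R) (k : nat) (z : C) : R :=
  sum_f_R0 (fun n => c (S n) * K alpha r (S n) k z) 9.

From Stdlib Require Import Reals Lra Lia.
From Coquelicot Require Import Coquelicot.
Open Scope R_scope.

(* K_i[alpha](z) is r^{beta_i} times the differential of the stereographic projection at
   Psi[alpha](z), applied to the partial derivative of Psi[alpha](z) in alpha_i.  That
   differential is injective, so a vanishing combination sum c_i K_i forces the variation
   of Psi in the direction (c_i r^{beta_i})_i to vanish.  Writing Psi = N/D, this says that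
   (a2 z^2 + a1 z + a0) D + N (b1 z + b2 z^2) = 0 wherever D(z) <> 0, the complex
   coefficients being built from the c_i r^{beta_i}.  The quartic vanishes at five real
   points near 0, so all its coefficients vanish: a0 = 0, and (a1, a2, b1, b2) solves the
   Sylvester system of N and D.  At the roots of N, which are not roots of D because Psi is
   irreducible, a2 z + a1 must vanish; this kills a1 and a2, and then alpha_1 + i alpha_2 <> 0
   kills b1 and b2. *)

Definition S_comp_diff (k : nat) (w v : C) : R :=
  let n := Re w ^ 2 + Im w ^ 2 in
  let l := Re w * Re v + Im w * Im v in
  match k with
  | O => 2 * (Re v * (1 + n) - 2 * Re w * l) / (1 + n) ^ 2
  | 1%nat => 2 * (Im v * (1 + n) - 2 * Im w * l) / (1 + n) ^ 2
  | _ => 4 * l / (1 + n) ^ 2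
  end.

Lemma is_derive_S_comp (k : nat) (g : R -> C) (t0 : R) (v : C) :
  is_derive (fun t => Re (g t)) t0 (Re v) -> is_derive (fun t => Im (g t)) t0 (Im v) ->
  is_derive (fun t => S_comp k (g t)) t0 (S_comp_diff k (g t0) v).
Proof.
  intros Hre Him.
  set (u := fun t => Re (g t)) in *. set (w := fun t => Im (g t)) in *.
  assert (Hform : forall t, S_comp k (g t) =
    let n := u t ^ 2 + w t ^ 2 in
    match k with
    | O => 2 * u t / (1 + n) | 1%nat => 2 * w t / (1 + n) | _ => (n - 1) / (1 + n)
    end).
  { intro t. unfold S_comp, Cmod, u, w. rewrite pow2_sqrt; [reflexivity | simpl; nra]. }
  eapply is_derive_ext; [intro t; symmetry; apply Hform |].
  assert (Hpos : 0 < 1 + (u t0 ^ 2 + w t0 ^ 2)) by nra.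
  assert (Du : Derive (fun t => u t) t0 = Re v) by now apply is_derive_unique.
  assert (Dw : Derive (fun t => w t) t0 = Im v) by now apply is_derive_unique.
  assert (Eu : ex_derive u t0) by now exists (Re v).
  assert (Ew : ex_derive w t0) by now exists (Im v).
  destruct k as [|[|k]]; auto_derive; try (repeat split; auto; lra);
    rewrite Du, Dw; unfold S_comp_diff, u, w in *; field; lra.
Qed.

Lemma is_derive_quot_affine (n0 n1 d0 d1 : C) (t0 : R) : d0 <> 0%C ->
  let q t := ((n0 + RtoC (t - t0) * n1) / (d0 + RtoC (t - t0) * d1))%C in
  let v := ((n1 * d0 - n0 * d1) / (d0 * d0))%C in
  is_derive (fun t => Re (q t)) t0 (Re v) /\ is_derive (fun t => Im (q t)) t0 (Im v).
Proof.
  intros Hd q v.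
  assert (Hd2 : Re d0 ^ 2 + Im d0 ^ 2 <> 0).
  { contradict Hd. apply injective_projections; simpl; unfold Re, Im in Hd; nra. }
  destruct n0 as [a b], n1 as [c d], d0 as [e f], d1 as [g h].
  unfold q, v, Re, Im, Cdiv, Cinv, Cmult, Cplus, Cminus, Copp, RtoC in *; simpl in *.
  split; auto_derive; rewrite ?Rplus_opp_r, ?Rmult_0_l, ?Ropp_0, ?Rplus_0_r;
    try (repeat split; exact Hd2); field; split; contradict Hd2; nra.
Qed.

Lemma Derive_S_comp_quot_affine (k : nat) (n0 n1 d0 d1 : C) (t0 : R) : d0 <> 0%C ->
  Derive (fun t => S_comp k ((n0 + RtoC (t - t0) * n1) / (d0 + RtoC (t - t0) * d1))%C) t0
  = S_comp_diff k (n0 / d0)%C ((n1 * d0 - n0 * d1) / (d0 * d0))%C.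
Proof.
  intro Hd. destruct (is_derive_quot_affine n0 n1 d0 d1 t0 Hd) as [Hre Him].
  apply is_derive_unique.
  replace (n0 / d0)%C with ((n0 + RtoC (t0 - t0) * n1) / (d0 + RtoC (t0 - t0) * d1))%C.
  - exact (is_derive_S_comp k _ t0 _ Hre Him).
  - rewrite Rminus_diag. f_equal; ring.
Qed.

Lemma S_comp_diff_plus (k : nat) (w v1 v2 : C) :
  S_comp_diff k w (v1 + v2)%C = S_comp_diff k w v1 + S_comp_diff k w v2.
Proof.
  assert (0 < 1 + (Re w ^ 2 + Im w ^ 2)) by nra.
  destruct k as [|[|k]]; unfold S_comp_diff, Re, Im, Cplus in *; simpl; field; lra.
Qed.

Lemma S_comp_diff_scal (k : nat) (w : C) (a : R) (v : C) :
  S_comp_diff k w (RtoC a * v)%C = a * S_comp_diff k w v.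
Proof.
  assert (0 < 1 + (Re w ^ 2 + Im w ^ 2)) by nra.
  destruct k as [|[|k]]; unfold S_comp_diff, Re, Im, RtoC, Cmult in *; simpl; field; lra.
Qed.

Lemma S_comp_diff_eq0 (w v : C) :
  (forall k, (k < 3)%nat -> S_comp_diff k w v = 0) -> v = 0%C.
Proof.
  intro H. pose proof (H 0%nat ltac:(lia)) as H0. pose proof (H 1%nat ltac:(lia)) as H1.
  pose proof (H 2%nat ltac:(lia)) as H2. unfold S_comp_diff in H0, H1, H2.
  set (D := (1 + (Re w ^ 2 + Im w ^ 2)) ^ 2) in *.
  assert (HD : 0 < D) by (apply pow_lt; nra).
  assert (Hnum : forall X, X / D = 0 -> X = 0).
  { intros X HX. replace X with (X / D * D) by (field; lra). rewrite HX. ring. }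
  apply Hnum in H0, H1, H2.
  assert (Hl : Re w * Re v + Im w * Im v = 0) by lra.
  rewrite Hl in H0, H1.
  unfold Re, Im in *. apply injective_projections; simpl; nra.
Qed.

Fixpoint Csum (f : nat -> C) (n : nat) : C :=
  match n with O => f O | S m => (Csum f m + f (S m))%C end.

Lemma sum_f_R0_S_comp_diff (k : nat) (w : C) (a : nat -> R) (v : nat -> C) (n : nat) :
  sum_f_R0 (fun j => a j * S_comp_diff k w (v j)) n
  = S_comp_diff k w (Csum (fun j => RtoC (a j) * v j)%C n).
Proof.
  induction n as [|n IH]; simpl.
  - now rewrite S_comp_diff_scal.
  - now rewrite IH, S_comp_diff_plus, S_comp_diff_scal.
Qed.

Definition unit_vec (i : nat) : nat -> R := fun j => if Nat.eqb j i then 1 else 0.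

(* The derivative of s |-> Psi[alpha + s beta] at s = 0, as Psi_num and Psi_den - 1 are
   linear in the parameters. *)
Definition Psi_variation (alpha beta : nat -> R) (z : C) : C :=
  ((Psi_num beta z * Psi_den alpha z - Psi_num alpha z * (Psi_den beta z - 1))
   / (Psi_den alpha z * Psi_den alpha z))%C.

Lemma upd_unit_vec (alpha : nat -> R) (i : nat) (t : R) (j : nat) :
  upd alpha i t j = alpha j + (t - alpha i) * unit_vec i j.
Proof.
  unfold upd, unit_vec. destruct (Nat.eqb j i) eqn:E; [apply Nat.eqb_eq in E; subst |]; ring.
Qed.

Lemma cpx_affine (a b a' b' s : R) :
  cpx (a + s * a') (b + s * b') = (cpx a b + RtoC s * cpx a' b')%C.
Proof. unfold cpx, RtoC, Cplus, Cmult. simpl. f_equal; ring. Qed.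

Lemma Psi_num_upd (alpha : nat -> R) (i : nat) (t : R) (z : C) :
  Psi_num (upd alpha i t) z = (Psi_num alpha z + RtoC (t - alpha i) * Psi_num (unit_vec i) z)%C.
Proof. unfold Psi_num. rewrite !upd_unit_vec, !cpx_affine. ring. Qed.

Lemma Psi_den_upd (alpha : nat -> R) (i : nat) (t : R) (z : C) :
  Psi_den (upd alpha i t) z
  = (Psi_den alpha z + RtoC (t - alpha i) * (Psi_den (unit_vec i) z - 1))%C.
Proof. unfold Psi_den. rewrite !upd_unit_vec, !cpx_affine. ring. Qed.

Lemma K_eq (alpha : nat -> R) (r : R) (i k : nat) (z : C) : Psi_den alpha z <> 0%C ->
  K alpha r i k z
  = rbeta r i * S_comp_diff k (Psi alpha z) (Psi_variation alpha (unit_vec i) z).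
Proof.
  intro HD. unfold K, Psi. f_equal.
  erewrite Derive_ext; [| intro t; rewrite Psi_num_upd, Psi_den_upd; reflexivity].
  now apply Derive_S_comp_quot_affine.
Qed.

Lemma cpx_eq (a b : R) : cpx a b = (RtoC a + RtoC b * Ci)%C.
Proof. unfold cpx, RtoC, Ci, Cplus, Cmult. simpl. f_equal; ring. Qed.

Lemma Psi_variation_unit_vec (alpha beta : nat -> R) (z : C) : Psi_den alpha z <> 0%C ->
  Csum (fun n => RtoC (beta (S n)) * Psi_variation alpha (unit_vec (S n)) z)%C 9
  = Psi_variation alpha beta z.
Proof.
  intro HD. unfold Psi_variation. simpl. unfold Psi_num, Psi_den, unit_vec in *. simpl.
  rewrite !cpx_eq in *. field. exact HD.
Qed.

Definition weighted (c : nat -> R) (r : R) (i : nat) : R := c i * rbeta r i.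

Lemma lincomb_eq (c alpha : nat -> R) (r : R) (k : nat) (z : C) : Psi_den alpha z <> 0%C ->
  lincomb c alpha r k z = S_comp_diff k (Psi alpha z) (Psi_variation alpha (weighted c r) z).
Proof.
  intro HD. unfold lincomb.
  rewrite (sum_eq _ (fun n => weighted c r (S n)
     * S_comp_diff k (Psi alpha z) (Psi_variation alpha (unit_vec (S n)) z))).
  - now rewrite sum_f_R0_S_comp_diff, Psi_variation_unit_vec.
  - intros n _. rewrite K_eq by exact HD. unfold weighted. ring.
Qed.

Lemma C_sqrt_exists (w : C) : exists s : C, (s * s = w)%C.
Proof.
  destruct w as [x y].
  set (m := sqrt (x ^ 2 + y ^ 2)).
  assert (Hm : m * m = x ^ 2 + y ^ 2) by (apply sqrt_sqrt; nra).
  assert (Hm0 : 0 <= m) by apply sqrt_pos.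
  assert (Hp : 0 <= (m + x) / 2) by nra.
  assert (Hn : 0 <= (m - x) / 2) by nra.
  set (a := sqrt ((m + x) / 2)). set (b := sqrt ((m - x) / 2)).
  assert (Ha : a * a = (m + x) / 2) by now apply sqrt_sqrt.
  assert (Hb : b * b = (m - x) / 2) by now apply sqrt_sqrt.
  assert (Hab : 0 <= a * b) by (apply Rmult_le_pos; apply sqrt_pos).
  assert (Hab2 : (2 * a * b) ^ 2 = y ^ 2).
  { replace ((2 * a * b) ^ 2) with (4 * (a * a) * (b * b)) by ring. rewrite Ha, Hb. nra. }
  destruct (Rle_lt_dec 0 y) as [Hy | Hy];
    [exists (a, b) | exists (a, - b)]; unfold Cmult; simpl; f_equal; nra.
Qed.

Lemma Cmult_eq0_l (a d : C) : d <> 0%C -> (a * d)%C = 0%C -> a = 0%C.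
Proof.
  intros Hd H. replace a with (a * d / d)%C by (field; exact Hd). rewrite H. field. exact Hd.
Qed.

Lemma C_two_nz : (1 + 1)%C <> 0%C.
Proof. intro H. apply (f_equal fst) in H. simpl in H. lra. Qed.

Lemma quadratic_factor (al be ga : C) : al <> 0%C ->
  exists z0 z1 : C, forall z, (al * z * z + be * z + ga = al * (z - z0) * (z - z1))%C.
Proof.
  intro Hal. destruct (C_sqrt_exists (be * be - (1 + 1) * (1 + 1) * al * ga)%C) as [s Hs].
  assert (H2 := C_two_nz).
  exists ((- be + s) / ((1 + 1) * al))%C, ((- be - s) / ((1 + 1) * al))%C. intro z.
  transitivity (al * z * z + be * z + (be * be - s * s) / ((1 + 1) * (1 + 1) * al))%C.
  - rewrite Hs. field. tauto.
  - field. tauto.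
Qed.

Lemma C_shift_nz (z : C) (u : C) : u <> 0%C -> (z + u)%C <> z.
Proof. intros Hu E. apply Hu. replace u with (z + u - z)%C by ring. rewrite E. ring. Qed.

Lemma sylvester_a_eq0 (al be ga de ep a1 a2 b1 b2 : C) :
  al <> 0%C ->
  (forall z, ~ ((al * z * z + be * z + ga = 0)%C /\ (1 - de * z - ep * z * z = 0)%C)) ->
  (forall z, ((a2 * z + a1) * (1 - de * z - ep * z * z)
              + (al * z * z + be * z + ga) * (b1 + b2 * z) = 0)%C) ->
  (- (a2 * ep) + al * b2 = 0)%C ->
  a1 = 0%C /\ a2 = 0%C.
Proof.
  intros Hal Hcop HF0 Hlead.
  set (D z := (1 - de * z - ep * z * z)%C).
  assert (HF : forall z,
    ((a2 * z + a1) * D z + (al * z * z + be * z + ga) * (b1 + b2 * z) = 0)%C) by exact HF0.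
  clear HF0.
  destruct (quadratic_factor al be ga Hal) as [z0 [z1 HN]].
  assert (HD : forall z, (z = z0 \/ z = z1) -> D z <> 0%C).
  { intros z Hz E. apply (Hcop z). split; [| exact E].
    rewrite HN. destruct Hz as [-> | ->]; ring. }
  assert (Ha1 : (a2 * z0 + a1 = 0)%C).
  { apply (Cmult_eq0_l _ (D z0)); [apply HD; now left |].
    rewrite <- (HF z0), HN. ring. }
  set (G z := (a2 * D z + al * (z - z1) * (b1 + b2 * z))%C).
  assert (HG_off : forall z, z <> z0 -> G z = 0%C).
  { intros z Hz. apply (Cmult_eq0_l _ (z - z0)).
    - intro E. apply Hz. replace z with (z - z0 + z0)%C by ring. rewrite E. ring.
    - transitivity ((a2 * z + a1) * D z + al * (z - z0) * (z - z1) * (b1 + b2 * z)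
        - (a2 * z0 + a1) * D z)%C; [unfold G; ring |].
      rewrite Ha1, <- HN, HF. ring. }
  (* G is affine since its z^2 coefficient vanishes, hence it is determined by its values at
     two points other than z0 *)
  assert (HG : forall z, G z = 0%C).
  { intro z. set (p := (z0 + 1)%C).
    transitivity (G p + (z - p) * (G (p + 1) - G p)
      + (- (a2 * ep) + al * b2) * (z - p) * (z - p - 1))%C; [unfold G, D; ring |].
    rewrite Hlead, !HG_off; [ring | |].
    - unfold p. rewrite <- Cplus_assoc. apply C_shift_nz, C_two_nz.
    - apply C_shift_nz. intro H. apply (f_equal fst) in H. simpl in H. lra. }
  assert (Ha2 : a2 = 0%C).
  { apply (Cmult_eq0_l _ (D z1)); [apply HD; now right |].
    rewrite <- (HG z1). unfold G. ring. }
  split; [rewrite <- Ha1, Ha2; ring | exact Ha2].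
Qed.

(* The hypotheses say that (a2 z + a1) (1 - de z - ep z^2) + (al z^2 + be z + ga) (b1 + b2 z)
   has zero coefficients. *)
Lemma sylvester_trivial (al be ga de ep a1 a2 b1 b2 : C) :
  al <> 0%C ->
  (forall z, ~ ((al * z * z + be * z + ga = 0)%C /\ (1 - de * z - ep * z * z = 0)%C)) ->
  (a1 + ga * b1 = 0)%C ->
  (a2 - a1 * de + be * b1 + ga * b2 = 0)%C ->
  (- (a2 * de) - a1 * ep + al * b1 + be * b2 = 0)%C ->
  (- (a2 * ep) + al * b2 = 0)%C ->
  a1 = 0%C /\ a2 = 0%C /\ b1 = 0%C /\ b2 = 0%C.
Proof.
  intros Hal Hcop E1 E2 E3 E4.
  assert (HF : forall z, ((a2 * z + a1) * (1 - de * z - ep * z * z)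
                          + (al * z * z + be * z + ga) * (b1 + b2 * z) = 0)%C).
  { intro z.
    transitivity ((a1 + ga * b1) + (a2 - a1 * de + be * b1 + ga * b2) * z
      + (- (a2 * de) - a1 * ep + al * b1 + be * b2) * z * z
      + (- (a2 * ep) + al * b2) * z * z * z)%C; [ring |].
    rewrite E1, E2, E3, E4. ring. }
  destruct (sylvester_a_eq0 al be ga de ep a1 a2 b1 b2 Hal Hcop HF E4) as [-> ->].
  assert (Hb2 : b2 = 0%C) by (apply (Cmult_eq0_l _ al); [exact Hal | rewrite <- E4; ring]).
  subst b2.
  assert (Hb1 : b1 = 0%C) by (apply (Cmult_eq0_l _ al); [exact Hal | rewrite <- E3; ring]).
  auto.
Qed.

Lemma real_quartic_coeffs_eq0 (x0 x1 x2 x3 x4 h : R) : h <> 0 ->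
  (forall k : nat, (k <= 4)%nat ->
     let t := INR k * h in x0 + x1 * t + x2 * t ^ 2 + x3 * t ^ 3 + x4 * t ^ 4 = 0) ->
  x0 = 0 /\ x1 = 0 /\ x2 = 0 /\ x3 = 0 /\ x4 = 0.
Proof.
  intros Hh H.
  pose proof (H 0%nat ltac:(lia)) as E0. pose proof (H 1%nat ltac:(lia)) as E1.
  pose proof (H 2%nat ltac:(lia)) as E2. pose proof (H 3%nat ltac:(lia)) as E3.
  pose proof (H 4%nat ltac:(lia)) as E4. simpl in E0, E1, E2, E3, E4.
  assert (Hx0 : x0 = 0) by (rewrite <- E0; ring).
  assert (Hcancel : forall x j, x * h ^ j = 0 -> x = 0).
  { intros x j Hx. apply Rmult_integral in Hx.
    destruct Hx as [Hx | Hx]; [exact Hx | now apply pow_nonzero in Hx]. }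
  (* the scaled coefficients x_j h^j solve an invertible Vandermonde system *)
  set (y1 := x1 * h ^ 1). set (y2 := x2 * h ^ 2).
  set (y3 := x3 * h ^ 3). set (y4 := x4 * h ^ 4).
  assert (F1 : y1 + y2 + y3 + y4 = 0) by (rewrite <- E1, Hx0; unfold y1, y2, y3, y4; ring).
  assert (F2 : 2 * y1 + 4 * y2 + 8 * y3 + 16 * y4 = 0)
    by (rewrite <- E2, Hx0; unfold y1, y2, y3, y4; ring).
  assert (F3 : 3 * y1 + 9 * y2 + 27 * y3 + 81 * y4 = 0)
    by (rewrite <- E3, Hx0; unfold y1, y2, y3, y4; ring).
  assert (F4 : 4 * y1 + 16 * y2 + 64 * y3 + 256 * y4 = 0)
    by (rewrite <- E4, Hx0; unfold y1, y2, y3, y4; ring).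
  repeat split; [exact Hx0 | apply (Hcancel x1 1%nat) | apply (Hcancel x2 2%nat)
                | apply (Hcancel x3 3%nat) | apply (Hcancel x4 4%nat)];
    [change (y1 = 0) | change (y2 = 0) | change (y3 = 0) | change (y4 = 0)]; lra.
Qed.

Lemma quartic_coeffs_eq0 (e0 e1 e2 e3 e4 : C) (h : R) : h <> 0 ->
  (forall k : nat, (k <= 4)%nat ->
     let t := RtoC (INR k * h) in
     (e0 + e1 * t + e2 * t * t + e3 * t * t * t + e4 * t * t * t * t)%C = 0%C) ->
  e0 = 0%C /\ e1 = 0%C /\ e2 = 0%C /\ e3 = 0%C /\ e4 = 0%C.
Proof.
  intros Hh H.
  destruct e0 as [p0 q0], e1 as [p1 q1], e2 as [p2 q2], e3 as [p3 q3], e4 as [p4 q4].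
  destruct (real_quartic_coeffs_eq0 p0 p1 p2 p3 p4 h Hh) as (P0 & P1 & P2 & P3 & P4).
  { intros k Hk t. pose proof (f_equal fst (H k Hk)) as Hk'. simpl in Hk'. unfold t. lra. }
  destruct (real_quartic_coeffs_eq0 q0 q1 q2 q3 q4 h Hh) as (Q0 & Q1 & Q2 & Q3 & Q4).
  { intros k Hk t. pose proof (f_equal snd (H k Hk)) as Hk'. simpl in Hk'. unfold t. lra. }
  subst. repeat split.
Qed.

Lemma den_nz_near0 (de ep : C) (t : R) :
  0 <= t -> t * (1 + Rabs (Re de) + Rabs (Re ep)) <= 1 / 2 ->
  (1 - de * RtoC t - ep * RtoC t * RtoC t)%C <> 0%C.
Proof.
  intros Ht Hsmall E. apply (f_equal Re) in E.
  destruct de as [a a'], ep as [b b']. unfold Re in *. simpl in *.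
  pose proof (Rle_abs a). pose proof (Rle_abs (- a)).
  pose proof (Rle_abs b). pose proof (Rle_abs (- b)). rewrite !Rabs_Ropp in *.
  assert (t <= 1 / 2) by nra.
  nra.
Qed.

Lemma quadratic_syzygy_trivial (al be ga de ep a0 a1 a2 b1 b2 : C) :
  al <> 0%C ->
  (forall z, ~ ((al * z * z + be * z + ga = 0)%C /\ (1 - de * z - ep * z * z = 0)%C)) ->
  (forall z, (1 - de * z - ep * z * z)%C <> 0%C ->
     ((a2 * z * z + a1 * z + a0) * (1 - de * z - ep * z * z)
      + (al * z * z + be * z + ga) * (b1 * z + b2 * z * z) = 0)%C) ->
  a0 = 0%C /\ a1 = 0%C /\ a2 = 0%C /\ b1 = 0%C /\ b2 = 0%C.
Proof.
  intros Hal Hcop HP.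
  set (M := 1 + Rabs (Re de) + Rabs (Re ep)).
  assert (HM : 0 < M).
  { unfold M. pose proof (Rabs_pos (Re de)). pose proof (Rabs_pos (Re ep)). lra. }
  destruct (quartic_coeffs_eq0 a0 (a1 - a0 * de + ga * b1)
      (a2 - a1 * de - a0 * ep + be * b1 + ga * b2)
      (- (a2 * de) - a1 * ep + al * b1 + be * b2) (- (a2 * ep) + al * b2) (/ (8 * M)))
    as (E0 & E1 & E2 & E3 & E4).
  { apply Rinv_neq_0_compat. lra. }
  { intros k Hk t. rewrite <- (HP t); [ring |].
    apply le_INR in Hk. replace (INR 4) with 4 in Hk by (simpl; ring).
    apply den_nz_near0.
    - apply Rmult_le_pos; [apply pos_INR | apply Rlt_le, Rinv_0_lt_compat; lra].
    - fold M. replace (INR k * / (8 * M) * M) with (INR k / 8) by (field; lra). lra. }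
  subst a0.
  destruct (sylvester_trivial al be ga de ep a1 a2 b1 b2 Hal Hcop) as (A1 & A2 & B1 & B2);
    [rewrite <- E1; ring | rewrite <- E2; ring | exact E3 | exact E4 |].
  auto.
Qed.

Lemma cpx_eq0 (a b : R) : cpx a b = 0%C -> a = 0 /\ b = 0.
Proof. intro H. unfold cpx in H. injection H. auto. Qed.

Lemma rbeta_nz (r : R) (i : nat) : 0 < r -> rbeta r i <> 0.
Proof.
  intro Hr. assert (r ^ 2 <> 0) by (apply pow_nonzero; lra).
  unfold rbeta. destruct i as [|[|[|[|[|[|[|[|[|i]]]]]]]]]; auto with real.
Qed.

Theorem lemma4p1 (alpha : nat -> R) :
  Psi_irreducible alpha ->
  cpx (alpha 1%nat) (alpha 2%nat) <> 0%C ->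
  forall r : R, 0 < r ->
  forall c : nat -> R,
    (forall (z : C) (k : nat), Psi_den alpha z <> 0%C -> (k < 3)%nat ->
       lincomb c alpha r k z = 0) ->
    forall i : nat, (1 <= i <= 10)%nat -> c i = 0.
Proof.
  intros Hirr Hal r Hr c Hc i Hi.
  assert (Hvar : forall z, Psi_den alpha z <> 0%C -> Psi_variation alpha (weighted c r) z = 0%C).
  { intros z HD. apply (S_comp_diff_eq0 (Psi alpha z)). intros k Hk.
    rewrite <- lincomb_eq by exact HD. now apply Hc. }
  set (w := weighted c r) in Hvar.
  destruct (quadratic_syzygy_trivial (cpx (alpha 1%nat) (alpha 2%nat))
      (cpx (alpha 3%nat) (alpha 4%nat)) (cpx (alpha 5%nat) (alpha 6%nat))
      (cpx (alpha 7%nat) (alpha 8%nat)) (cpx (alpha 9%nat) (alpha 10%nat))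
      (cpx (w 5%nat) (w 6%nat)) (cpx (w 3%nat) (w 4%nat)) (cpx (w 1%nat) (w 2%nat))
      (cpx (w 7%nat) (w 8%nat)) (cpx (w 9%nat) (w 10%nat)) Hal Hirr)
    as (A0 & A1 & A2 & B1 & B2).
  { intros z HD.
    transitivity (Psi_variation alpha w z * (Psi_den alpha z * Psi_den alpha z))%C.
    - unfold Psi_variation, Psi_num, Psi_den in *. field. exact HD.
    - rewrite (Hvar z HD). ring. }
  apply cpx_eq0 in A0, A1, A2, B1, B2.
  assert (Hw : w i = 0).
  { destruct i as [|[|[|[|[|[|[|[|[|[|[|i]]]]]]]]]]]; try lia; tauto. }
  unfold w, weighted in Hw. apply Rmult_integral in Hw.
  destruct Hw as [Hw | Hw]; [exact Hw | now apply rbeta_nz in Hw].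
Qed.
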